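(* Let $\mathcal{L}^{\mu}\in\mathbb{C}^{p\times t}$ be nonzero with $\|\mathcal{L}^{\mu}\|_{\max}<1$, let $N\in\mathbb{N}$ and $\alpha>0$, and set $\beta_k=\beta_k(N)=\min\{(1.5)^k,(1.5)^N\}\cdot\frac{1.25}{\|\mathcal{L}^{\mu}\|_2}$. Consider the iteration $\mathcal{N}^0=0$, $Z^0=\mathcal{L}^{\mu}/\|\mathcal{L}^{\mu}\|_2$ and, for $k\ge0$, $$\mathcal{A}^{k+1}=M^k-\hat P_{\alpha/\beta_k}(M^k),\quad M^k=\tfrac1{\beta_k}Z^k-\mathcal{N}^k+\mathcal{L}^{\mu},$$ $$\mathcal{N}^{k+1}=U\,\mathrm{diag}\big(\max\{\sigma_i-\tfrac1{\beta_k},0\}\big)V^*\ \text{ where } \mathcal{L}^{\mu}-\mathcal{A}^{k+1}+\tfrac1{\beta_k}Z^k=U\,\mathrm{diag}(\sigma_i)V^*\ \text{(SVD)},$$ $$Z^{k+1}=Z^k-\beta_k(\mathcal{N}^{k+1}+\mathcal{A}^{k+1}-\mathcal{L}^{\mu}).$$ Suppose there are constants $p>0$ and $q\in(0,1)$ such that $\|\mathcal{L}^{\mu}-\mathcal{N}^r-\mathcal{A}^r\|_{\max}\le pq^r$ for all $r\ge1$. If $$\alpha>c(\mathcal{L}^{\mu}):=\frac{\|\mathcal{L}^{\mu}\|_{\max}}{\|\mathcal{L}^{\mu}\|_2}+\frac{1.25p}{\|\mathcal{L}^{\mu}\|_2}\cdot\frac{1-(1.5)^Nq^N}{1-1.5q}+\frac{\beta_N(N)\,p\,q^N}{1-q},$$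 then $\|\mathcal{A}^k\|_{\max}<1$ for all $k\in\mathbb{N}$ (so the deformations reconstructed from the columns of $\mathcal{A}^k$ are bijective).
   Context: $\|A\|_{\max}=\max_{i,j}|a_{ij}|$; $\|A\|_2$ is the spectral norm (largest singular value); $V^*$ is the conjugate transpose; $\hat P_{r}$ acts entrywise as the Euclidean projection of $\mathbb{C}$ onto the closed disk $\{z:|z|\le r\}$. This iteration is the ADMM scheme for $\min\|\mathcal{N}\|_*+\alpha\|\mathcal{A}\|_1$ subject to $\mathcal{N}+\mathcal{A}=\mathcal{L}^{\mu}$, where $\|\mathcal{A}\|_1=\sum_{i,j}|a_{ij}|$. *)

From mathcomp Require Import all_boot all_order all_algebra reals complex.
Set Implicit Arguments. Unset Strict Implicit. Unset Printing Implicit Defensive.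
Import Order.TTheory GRing.Theory Num.Theory.
Local Open Scope ring_scope.

Section Defs.
Variable R : realType.
Local Notation C := R[i].

Definition cmod (z : C) : R := Normc.normc z.

Definition toC (x : R) : C := (x%:C)%C.

Definition maxnorm m n (A : 'M[C]_(m, n)) : R :=
  \big[Num.max/0]_(i < m) \big[Num.max/0]_(j < n) cmod (A i j).

Definition conjT m n (A : 'M[C]_(m, n)) : 'M[C]_(n, m) :=
  (map_mx (fun z => (z^*)%C) A)^T.

Definition unitary n (U : 'M[C]_n) : Prop := U *m conjT U = 1%:M.

Definition rdiag_nonneg m n (S : 'M[R]_(m, n)) : Prop :=
  (forall (i : 'I_m) (j : 'I_n), nat_of_ord i != nat_of_ord j -> S i j = 0) /\
  (forall i j, 0 <= S i j).

Definition is_svd m n (A : 'M[C]_(m, n)) (U : 'M[C]_m) (S : 'M[R]_(m, n))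
    (V : 'M[C]_n) : Prop :=
  [/\ unitary U, unitary V, rdiag_nonneg S & A = U *m map_mx toC S *m conjT V].

Definition spectral_norm m n (A : 'M[C]_(m, n)) (s : R) : Prop :=
  exists U S V, is_svd A U S V /\
    s = \big[Num.max/0]_(i < m) \big[Num.max/0]_(j < n) S i j.

Definition svt m n (tau : R) (A B : 'M[C]_(m, n)) : Prop :=
  exists U S V, is_svd A U S V /\
    B = U *m map_mx (fun x => toC (Num.max (x - tau) 0)) S *m conjT V.

Definition proj_disk (r : R) (z : C) : C :=
  if cmod z <= r then z else toC (r / cmod z) * z.

Definition beta (nL : R) (N k : nat) : R :=
  Num.min ((3 / 2) ^+ k) ((3 / 2) ^+ N) * ((5 / 4) / nL).

End Defs.

From mathcomp Require Import all_boot all_order all_algebra reals complex.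
From mathcomp Require Import ring lra.
Set Implicit Arguments. Unset Strict Implicit. Unset Printing Implicit Defensive.
Import Order.TTheory GRing.Theory Num.Theory.
Local Open Scope ring_scope.

(* Write b_k = beta_k(N) and c = ||L||_max / ||L||_2.
   1. The dual variable stays bounded: since Z^{k+1} = Z^k + b_k (L - N^{k+1} - A^{k+1})
      and the residual is at most p q^{k+1} <= p q^k entrywise,
      |Z^k_ij| <= c + sum_{j<k} b_j p q^j.
   2. Entrywise, A^{k+1} = M - P_r(M) with r = alpha / b_k, and z - P_r(z) has modulus
      < 1 as soon as |z| < r + 1.  Here |M_ij| <= |Z^k_ij| / b_k + |(L - N^k)_ij|.
   3. The scalar "budget" c + sum_{j<k} b_j p q^j + b_k p q^k is bounded by the constant
      c(L) of the theorem: adding the tail b_k p q^{k+1}/(1-q) gives a quantity that is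
      nondecreasing in k and constant from k = N on, whose value at N is c(L) - c.
   4. By induction, |(L - N^k)_ij| < 1 + p q^k: for k = 0 this is ||L||_max < 1, and
      L - N^{k+1} = A^{k+1} + (L - N^{k+1} - A^{k+1}) with |A^{k+1}_ij| < 1 by 1-3.
   The file first collects facts on the complex modulus, the max-norm and the disk
   projection, then the scalar estimates on beta (step 3), then steps 1, 2, 4 for the
   iteration in a section, and finally derives the theorem. *)

Section ModulusAndMaxNorm.
Variable R : realType.
Local Notation C := R[i].

Lemma cmodD (x y : C) : cmod (x + y) <= cmod x + cmod y.
Proof. exact: le_normcD. Qed.

Lemma cmodM (x y : C) : cmod (x * y) = cmod x * cmod y.
Proof. exact: Normc.normcM. Qed.

Lemma cmodR (x : R) : cmod (toC x) = `|x|.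
Proof. by rewrite /cmod /toC /= expr0n /= addr0 sqrtr_sqr. Qed.

Lemma cmod_entry_le_maxnorm m n (A : 'M[C]_(m, n)) i j : cmod (A i j) <= maxnorm A.
Proof.
rewrite /maxnorm; apply: le_trans (le_bigmax _ _ i).
exact: (le_bigmax _ (fun j => cmod (A i j)) j).
Qed.

Lemma maxnorm_lt1 m n (A : 'M[C]_(m, n)) :
  (forall i j, cmod (A i j) < 1) -> maxnorm A < 1.
Proof. by move=> hA; apply: bigmax_lt => // i _; apply: bigmax_lt. Qed.

Lemma cmod_sub_proj_disk_lt1 (r : R) (z : C) :
  0 <= r -> cmod z < r + 1 -> cmod (z - proj_disk r z) < 1.
Proof.
move=> r_ge0 hz; rewrite /proj_disk; case: ifP => inside.
  by rewrite subrr /cmod Normc.normc0.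
have r_lt : r < cmod z by rewrite ltNge inside.
have z_gt0 : 0 < cmod z by apply: le_lt_trans r_lt.
have -> : z - toC (r / cmod z) * z = toC (1 - r / cmod z) * z.
  by rewrite /toC rmorphB rmorph1 mulrBl mul1r.
rewrite cmodM cmodR ger0_norm; last by rewrite subr_ge0 ler_pdivrMr // mul1r ltW.
by rewrite mulrBl mul1r divfK ?gt_eqF // ltrBlDr addrC.
Qed.

(* The spectral norm of a nonzero matrix is positive: if all singular values
   vanish then the SVD reconstructs the zero matrix. *)
Lemma spectral_norm_gt0 m n (A : 'M[C]_(m, n)) s :
  A != 0 -> spectral_norm A s -> 0 < s.
Proof.
move=> A_neq0 [U [S [V [[_ _ [_ S_ge0] A_svd] ->]]]].
rewrite lt_def bigmax_ge_id andbT; apply: contra A_neq0 => /eqP max0.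
rewrite A_svd; have -> : S = 0.
  apply/matrixP => i j; rewrite mxE; apply/eqP; rewrite eq_le S_ge0 andbT -max0.
  apply: le_trans (le_bigmax _ _ i); exact: (le_bigmax _ (fun j => S i j) j).
have -> : map_mx (@toC R) (0 : 'M[R]_(m, n)) = 0.
  by apply/matrixP => i j; rewrite !mxE /toC rmorph0.
by rewrite mulmx0 mul0mx.
Qed.

End ModulusAndMaxNorm.

Section BetaEstimates.
Variable R : realType.
Variables (nL : R) (N : nat) (p q : R).
Hypotheses (nL_gt0 : 0 < nL) (p_gt0 : 0 < p) (q_gt0 : 0 < q) (q_lt1 : q < 1).
Local Notation b := (beta nL N).

Lemma beta_below k : (k <= N)%N -> b k = (3 / 2) ^+ k * (5 / 4 / nL).
Proof.
by move=> le_kN; rewrite /beta; congr (_ * _); apply/min_idPl; apply: ler_weXn2l => //; lra.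
Qed.

Lemma beta_above k : (N <= k)%N -> b k = (3 / 2) ^+ N * (5 / 4 / nL).
Proof.
by move=> le_Nk; rewrite /beta; congr (_ * _); apply/min_idPr; apply: ler_weXn2l => //; lra.
Qed.

Lemma beta_gt0 k : 0 < b k.
Proof.
have h32 : 0 < 3 / 2 :> R by lra.
have h54 : 0 < 5 / 4 :> R by lra.
by rewrite /beta mulr_gt0 ?divr_gt0 // lt_min !exprn_gt0.
Qed.

Lemma beta_nondecr k : b k <= b k.+1.
Proof.
have [le_Nk | lt_kN] := leqP N k; first by rewrite !beta_above // (leq_trans le_Nk).
have h54 : 0 <= 5 / 4 :> R by lra.
rewrite !beta_below ?(ltnW lt_kN) // ler_wpM2r ?divr_ge0 ?(ltW nL_gt0) //.
by apply: ler_weXn2l => //; lra.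
Qed.

(* The partial budget plus the geometric tail b_k p q^{k+1} / (1 - q). *)
Definition budget k := \sum_(j < k) b j * p * q ^+ j + b k * p * q ^+ k / (1 - q).

Lemma budget_step k :
  budget k.+1 = budget k + p * q ^+ k * q / (1 - q) * (b k.+1 - b k).
Proof.
rewrite /budget big_ord_recr /= exprS; field.
by rewrite subr_eq0 eq_sym lt_eqF.
Qed.

(* The budget grows until step N and is constant afterwards, so it peaks at N. *)
Lemma budget_le_N k : budget k <= budget N.
Proof.
have step_ge0 j : 0 <= p * q ^+ j * q / (1 - q) * (b j.+1 - b j).
  by rewrite mulr_ge0 ?subr_ge0 ?beta_nondecr ?divr_ge0 ?mulr_ge0 ?exprn_ge0 ?subr_ge0 ?ltW.
have [le_kN | lt_Nk] := leqP k N.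
  rewrite -(subnK le_kN); elim: (N - k)%N => [|d IH] //.
  by apply: le_trans IH _; rewrite addSn budget_step lerDl.
rewrite -(subnK (ltnW lt_Nk)); elim: (k - N)%N => [|d IH] //.
by rewrite addSn budget_step !beta_above ?leq_addl ?(leqW (leq_addl _ _)) // subrr mulr0 addr0.
Qed.

Lemma geometric_sum (x : R) k : (\sum_(j < k) x ^+ j) * (1 - x) = 1 - x ^+ k.
Proof.
elim: k => [|k IH]; first by rewrite big_ord0 expr0 mul0r subrr.
by rewrite big_ord_recr /= mulrDl IH exprS; ring.
Qed.

(* The peak value of the budget is the closed form appearing in c(L). *)
Lemma budget_N_closed_form : 3 / 2 * q != 1 ->
  budget N = (5 / 4) * p / nL * ((1 - (3 / 2) ^+ N * q ^+ N) / (1 - 3 / 2 * q))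
             + b N * p * q ^+ N / (1 - q).
Proof.
move=> q_neq; rewrite /budget; congr (_ + _).
have -> : \sum_(j < N) b j * p * q ^+ j
          = (5 / 4) * p / nL * \sum_(j < N) (3 / 2 * q) ^+ j.
  rewrite mulr_sumr; apply: eq_bigr => j _.
  by rewrite beta_below ?(ltnW (ltn_ord j)) // [in RHS]exprMn; field; rewrite gt_eqF.
rewrite -exprMn -(geometric_sum (3 / 2 * q) N); field.
apply/andP; split; last by rewrite gt_eqF.
by apply/eqP => h; move/eqP: q_neq; apply; lra.
Qed.

(* Dropping the tail factor 1 / (1 - q) >= 1 only decreases the last term. *)
Lemma partial_budget_le k :
  \sum_(j < k) b j * p * q ^+ j + b k * p * q ^+ k <= budget k.
Proof.
rewrite /budget lerD2l ler_pdivlMr ?subr_gt0 // ler_piMr ?lerBlDr ?lerDl ?ltW //.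
by rewrite mulr_gt0 ?exprn_gt0 // mulr_gt0 ?beta_gt0.
Qed.

End BetaEstimates.

Section ADMMIteration.
Variables (R : realType) (m n : nat) (L : 'M[R[i]]_(m, n)) (nL : R) (N : nat).
Variables (alpha p q : R) (Nm Am Zm : nat -> 'M[R[i]]_(m, n)).
Local Notation b := (beta nL N).
Local Notation C := R[i].

Hypotheses (nL_gt0 : 0 < nL) (alpha_gt0 : 0 < alpha).
Hypotheses (p_gt0 : 0 < p) (q_gt0 : 0 < q) (q_lt1 : q < 1).
Hypothesis L_lt1 : maxnorm L < 1.
Hypothesis N0 : Nm 0%N = 0.
Hypothesis Z0 : Zm 0%N = toC (nL^-1) *: L.
Hypothesis A_step : forall k,
  Am k.+1 = (toC ((b k)^-1) *: Zm k - Nm k + L)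
            - map_mx (proj_disk (alpha / b k)) (toC ((b k)^-1) *: Zm k - Nm k + L).
Hypothesis Z_step : forall k, Zm k.+1 = Zm k - toC (b k) *: (Nm k.+1 + Am k.+1 - L).
Hypothesis residual : forall r, (0 < r)%N -> maxnorm (L - Nm r - Am r) <= p * q ^+ r.
Hypothesis within_budget : forall k,
  maxnorm L / nL + \sum_(j < k) b j * p * q ^+ j + b k * p * q ^+ k < alpha.

Let b_gt0 k : 0 < b k := @beta_gt0 R nL N nL_gt0 k.
Let b_ge0 k : 0 <= b k := ltW (b_gt0 k).

(* Step 1: the dual variable grows at most by b_k p q^k per iteration. *)
Lemma dual_entry_bound k i j :
  cmod (Zm k i j) <= maxnorm L / nL + \sum_(l < k) b l * p * q ^+ l.
Proof.
elim: k i j => [|k IH] i j.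
  rewrite Z0 big_ord0 addr0 mxE cmodM cmodR ger0_norm ?invr_ge0 ?(ltW nL_gt0) //.
  by rewrite mulrC ler_pM2r ?invr_gt0 // cmod_entry_le_maxnorm.
have -> : Zm k.+1 i j = Zm k i j + toC (b k) * (L - Nm k.+1 - Am k.+1) i j.
  by rewrite Z_step !mxE; ring.
rewrite big_ord_recr /= addrA; apply: le_trans (cmodD _ _) _; apply: lerD => //.
rewrite cmodM cmodR ger0_norm // -mulrA ler_pM2l //.
apply: le_trans (cmod_entry_le_maxnorm _ _ _) _; apply: le_trans (residual _) _ => //.
by rewrite ler_pM2l // exprS ler_piMl ?exprn_ge0 ?ltW.
Qed.

Lemma sparse_entry_lt1 k :
  (forall i j, cmod ((L - Nm k) i j) < 1 + p * q ^+ k) ->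
  forall i j, cmod (Am k.+1 i j) < 1.
Proof.
move=> lowrank_bd i j; rewrite A_step.
set M := toC (b k)^-1 *: Zm k - Nm k + L.
have -> : (M - map_mx (proj_disk (alpha / b k)) M) i j
          = M i j - proj_disk (alpha / b k) (M i j) by rewrite !mxE.
apply: cmod_sub_proj_disk_lt1; first by rewrite divr_ge0 ?(ltW alpha_gt0).
have -> : M i j = toC (b k)^-1 * Zm k i j + (L - Nm k) i j by rewrite !mxE; ring.
apply: le_lt_trans (cmodD _ _) _.
rewrite cmodM cmodR ger0_norm ?invr_ge0 //.
have dual_small : (b k)^-1 * cmod (Zm k i j) + p * q ^+ k < alpha / b k.
  have -> : (b k)^-1 * cmod (Zm k i j) + p * q ^+ k
            = (cmod (Zm k i j) + b k * p * q ^+ k) / b k.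
    by field; rewrite gt_eqF.
  rewrite ltr_pM2r ?invr_gt0 //.
  by apply: le_lt_trans (within_budget k); rewrite lerD2r dual_entry_bound.
have := lowrank_bd i j; lra.
Qed.

(* Step 4: induction on k, carrying the bound on L - N^k. *)
Lemma sparse_entries_lt1 k i j : cmod (Am k.+1 i j) < 1.
Proof.
elim: k i j => [|k IH]; apply: sparse_entry_lt1 => i j.
  rewrite N0 subr0 expr0 mulr1; apply: le_lt_trans (cmod_entry_le_maxnorm _ _ _) _.
  by apply: lt_le_trans L_lt1 _; rewrite lerDl ltW.
have -> : (L - Nm k.+1) i j = Am k.+1 i j + (L - Nm k.+1 - Am k.+1) i j.
  by rewrite !mxE; ring.
apply: le_lt_trans (cmodD _ _) _; apply: ltr_leD => //.
by apply: le_trans (cmod_entry_le_maxnorm _ _ _) _; apply: residual.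
Qed.

End ADMMIteration.

Theorem theorem7 (R : realType) (m n : nat) (L : 'M[R[i]]_(m, n)) (nL : R)
    (N : nat) (alpha p q : R) (Nm Am Zm : nat -> 'M[R[i]]_(m, n)) :
  L != 0 ->
  maxnorm L < 1 ->
  spectral_norm L nL ->
  0 < alpha ->
  Nm 0%N = 0 ->
  Zm 0%N = toC (nL^-1) *: L ->
  (forall k : nat,
     Am k.+1 = (toC ((beta nL N k)^-1) *: Zm k - Nm k + L)
               - map_mx (proj_disk (alpha / beta nL N k))
                        (toC ((beta nL N k)^-1) *: Zm k - Nm k + L)) ->
  (forall k : nat,
     svt (beta nL N k)^-1 (L - Am k.+1 + toC ((beta nL N k)^-1) *: Zm k) (Nm k.+1)) ->
  (forall k : nat,
     Zm k.+1 = Zm k - toC (beta nL N k) *: (Nm k.+1 + Am k.+1 - L)) ->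
  0 < p -> 0 < q -> q < 1 ->
  (forall r : nat, (0 < r)%N -> maxnorm (L - Nm r - Am r) <= p * q ^+ r) ->
  3 / 2 * q != 1 ->
  maxnorm L / nL
    + (5 / 4) * p / nL * ((1 - (3 / 2) ^+ N * q ^+ N) / (1 - 3 / 2 * q))
    + beta nL N N * p * q ^+ N / (1 - q) < alpha ->
  forall k : nat, maxnorm (Am k.+1) < 1.
Proof.
move=> L_neq0 L_lt1 specL alpha_gt0 N0 Z0 A_step _ Z_step p_gt0 q_gt0 q_lt1
  residual q_neq alpha_gt_c k.
have nL_gt0 : 0 < nL := spectral_norm_gt0 L_neq0 specL.
have within_budget k' : maxnorm L / nL + \sum_(j < k') beta nL N j * p * q ^+ j
                        + beta nL N k' * p * q ^+ k' < alpha.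
  apply: le_lt_trans alpha_gt_c.
  rewrite -addrA -[X in _ <= X]addrA -budget_N_closed_form // lerD2l.
  exact: le_trans (partial_budget_le N nL_gt0 p_gt0 q_gt0 q_lt1 k')
    (budget_le_N N nL_gt0 p_gt0 q_gt0 q_lt1 k').
apply: maxnorm_lt1 => i j.
exact: (@sparse_entries_lt1 R m n L nL N alpha p q Nm Am Zm nL_gt0 alpha_gt0
          p_gt0 q_gt0 q_lt1 L_lt1 N0 Z0 A_step Z_step residual within_budget).
Qed.
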